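(* Let $\Theta$ be a causal theory over $\mathfrak L$, let $\phi,\psi\in\mathfrak L$, and let $\Theta'=\Theta\cup\{\phi\triangleright\psi\}$. Write $\Box$ for the modal operator and $\vdash_\Box$ for derivability in $\mathbf S_\Theta$ (language $\mathcal L_\Box$), and $\Box'$, $\vdash_{\Box'}$ for the corresponding operator and derivability in $\mathbf S_{\Theta'}$ (language $\mathcal L_{\Box'}$). Define $\alpha:\mathcal L_{\Box'}\to\mathcal L_\Box$ by $\alpha(a)=a$ for atoms, $\alpha$ commuting with $\neg,\wedge,\vee,\to$ (and fixing $\top,\perp$), and $\alpha(\Box' p)=(\phi\wedge\Box(\psi\to\alpha(p)))\vee\Box\alpha(p)$. Then for all $\Gamma,\Delta\subseteq\mathcal L_{\Box'}$, $\Gamma\vdash_{\Box'}\Delta$ is derivable in $\mathbf S_{\Theta'}$ if and only if $\alpha(\Gamma)\vdash_\Box\alpha(\Delta)$ is derivable in $\mathbf S_\Theta$.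
   Context: $\mathfrak L$ is a classical propositional language. A causal rule is $\phi\triangleright\psi$ with $\phi,\psi\in\mathfrak L$; a causal theory $\Theta$ is a set of causal rules. For a causal theory $\Theta$, the language $\mathcal L_\Box$ is generated by $\mathfrak L$ and a unary operator $\Box$ (associated with $\Theta$). The sequent calculus $\mathbf S_\Theta$ derives sequents $\Gamma\vdash_\Box\Delta$ (collections possibly infinite; derivations well-founded, possibly infinitely branching) via: axiom $p\vdash_\Box p$; $\perp\vdash_\Box$; $\vdash_\Box\top$; weakening and contraction on both sides; classical two-sided LK rules for $\neg,\wedge,\vee,\to$ with shared contexts; $\Box$R: if $\phi_1\triangleright\psi_1,\dots,\phi_k\triangleright\psi_k\in\Theta$ and $\psi_1,\dots,\psi_k\vdash_\Box p$ is derivable, from $\Gamma\vdash_\Box\phi_1\wedge\dots\wedge\phi_k,\Delta$ infer $\Gamma\vdash_\Box\Box p,\Delta$ (empty conjunction $=\top$); $\Box$L: letting $\{S_j\}_{j\in J}$ be all finite $S_j\subseteq\Theta$ with $\{\psi:\phi\triangleright\psi\in S_j\}\vdash_\Box p$ derivable, from $\Gamma,\{\phi:\phi\triangleright\psi\in S_j\}\vdash_\Box\Delta$ for all $j\in J$ infer $\Gamma,\Box p\vdash_\Box\Delta$; multicut: from $\Gamma\vdash_\Box p^m,\Delta$ and $\Gamma',p^n\vdash_\Box\Delta'$ ($m,n>0$) infer $\Gamma,\Gamma'\vdash_\Box\Delta,\Delta'$. The calculus $\mathbf S_{\Theta'}$ is defined identically with $\Theta'$ and a new operator $\Box'$ in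 place of $\Theta$ and $\Box$. *)

From Stdlib Require Import List Arith.
Import ListNotations.
Set Implicit Arguments.

Section Syntax.
Variable A : Type.

Inductive pform : Type :=
| PAtom : A -> pform
| PTop : pform
| PBot : pform
| PNeg : pform -> pform
| PAnd : pform -> pform -> pform
| POr  : pform -> pform -> pform
| PImp : pform -> pform -> pform.

(* The modal language L_Box (one box operator; the operator's meaning is
   given by the causal theory the calculus is parameterised by) *)
Inductive form : Type :=
| Atom : A -> form
| Top : form
| Bot : form
| Neg : form -> form
| And : form -> form -> form
| Or  : form -> form -> form
| Imp : form -> form -> form
| Box : form -> form.

Fixpoint emb (f : pform) : form :=
  match f with
  | PAtom a => Atom a
  | PTop => Top
  | PBot => Bot
  | PNeg p => Neg (emb p)
  | PAnd p q => And (emb p) (emb q)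
  | POr p q => Or (emb p) (emb q)
  | PImp p q => Imp (emb p) (emb q)
  end.

Fixpoint mdepth (f : form) : nat :=
  match f with
  | Atom _ | Top | Bot => 0
  | Neg p => mdepth p
  | And p q | Or p q | Imp p q => Nat.max (mdepth p) (mdepth q)
  | Box p => S (mdepth p)
  end.

(* causal rule phi |> psi as a pair (phi, psi); causal theory = set of rules *)
Definition crule : Type := (pform * pform)%type.
Definition ctheory : Type := crule -> Prop.

Fixpoint bigconj (l : list pform) : pform :=
  match l with
  | [] => PTop
  | [x] => x
  | x :: xs => PAnd x (bigconj xs)
  end.

Definition fset : Type := form -> Prop.
Definition empty : fset := fun _ => False.
Definition sing (x : form) : fset := fun y => y = x.
Definition add (G : fset) (x : form) : fset := fun y => G y \/ y = x.
Definition union (G H : fset) : fset := fun y => G y \/ H y.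
Definition subset (G H : fset) : Prop := forall y, G y -> H y.
Definition lset (l : list pform) : fset := fun y => exists f, In f l /\ y = emb f.

(* The calculus, parameterised by:
   - Th : the causal theory,
   - allowed : the formulas p for which the box rules (on Box p) may be used,
   - O : the side condition "psi_1,...,psi_k |- p is derivable". *)
Inductive derivO (Th : ctheory) (allowed : form -> Prop)
    (O : list pform -> form -> Prop) : fset -> fset -> Prop :=
| d_ax : forall p, derivO Th allowed O (sing p) (sing p)
| d_botL : derivO Th allowed O (sing Bot) empty
| d_topR : derivO Th allowed O empty (sing Top)
| d_weak : forall G D G' D', derivO Th allowed O G D ->
    subset G G' -> subset D D' -> derivO Th allowed O G' D'
| d_negL : forall G D p, derivO Th allowed O G (add D p) ->
    derivO Th allowed O (add G (Neg p)) D
| d_negR : forall G D p, derivO Th allowed O (add G p) D ->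
    derivO Th allowed O G (add D (Neg p))
| d_andL : forall G D p q, derivO Th allowed O (add (add G p) q) D ->
    derivO Th allowed O (add G (And p q)) D
| d_andR : forall G D p q, derivO Th allowed O G (add D p) ->
    derivO Th allowed O G (add D q) -> derivO Th allowed O G (add D (And p q))
| d_orL : forall G D p q, derivO Th allowed O (add G p) D ->
    derivO Th allowed O (add G q) D -> derivO Th allowed O (add G (Or p q)) D
| d_orR : forall G D p q, derivO Th allowed O G (add (add D p) q) ->
    derivO Th allowed O G (add D (Or p q))
| d_impL : forall G D p q, derivO Th allowed O G (add D p) ->
    derivO Th allowed O (add G q) D -> derivO Th allowed O (add G (Imp p q)) D
| d_impR : forall G D p q, derivO Th allowed O (add G p) (add D q) ->
    derivO Th allowed O G (add D (Imp p q))
| d_boxR : forall G D (l : list crule) p, allowed p ->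
    (forall r, In r l -> Th r) -> O (map snd l) p ->
    derivO Th allowed O G (add D (emb (bigconj (map fst l)))) ->
    derivO Th allowed O G (add D (Box p))
| d_boxL : forall G D p, allowed p ->
    (forall l : list crule, (forall r, In r l -> Th r) -> O (map snd l) p ->
       derivO Th allowed O (union G (lset (map fst l))) D) ->
    derivO Th allowed O (add G (Box p)) D
| d_cut : forall G D G' D' p, derivO Th allowed O G (add D p) ->
    derivO Th allowed O (add G' p) D' ->
    derivO Th allowed O (union G G') (union D D').

(* Side condition psi_1..psi_k |- q, defined by recursion on modal depth
   (fuel n >= mdepth q): box rules inside it are only used on Box p with
   mdepth p < mdepth q. *)
Fixpoint Side (Th : ctheory) (n : nat) (psis : list pform) (q : form) : Prop :=
  match n with
  | 0 => False
  | S m => derivO Th (fun p => mdepth p < mdepth q) (Side Th m) (lset psis) (sing q)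
  end.

Definition Provable (Th : ctheory) (G D : fset) : Prop :=
  derivO Th (fun _ => True) (fun psis p => Side Th (S (mdepth p)) psis p) G D.

Definition ext (Th : ctheory) (phi psi : pform) : ctheory :=
  fun r => Th r \/ r = (phi, psi).

Fixpoint alpha (phi psi : pform) (f : form) : form :=
  match f with
  | Atom a => Atom a
  | Top => Top
  | Bot => Bot
  | Neg p => Neg (alpha phi psi p)
  | And p q => And (alpha phi psi p) (alpha phi psi q)
  | Or p q => Or (alpha phi psi p) (alpha phi psi q)
  | Imp p q => Imp (alpha phi psi p) (alpha phi psi q)
  | Box p => Or (And (emb phi) (Box (Imp (emb psi) (alpha phi psi p))))
                (Box (alpha phi psi p))
  end.

Definition image (g : form -> form) (G : fset) : fset :=
  fun y => exists x, G x /\ y = g x.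

End Syntax.

From Stdlib Require Import List Lia Classical.
Set Implicit Arguments.
Unset Strict Implicit.

(* Both calculi are instances of [derivO], which is parameterised by the formulas on
   which the box rules may act and by the side condition "ψ₁,…,ψₖ ⊢ p" of those rules.
   The two directions are proved for arbitrary such parameters, under the hypothesis
   that they are [compatible] (see below) on the boxed formulas involved:
   - Forward ([translate]): by induction on a Θ'-derivation, each rule is simulated in
     the Θ-calculus on the α-images; a box rule using φ ▷ ψ is simulated through the
     disjunct φ ∧ □(ψ → αp) of α(□'p).
   - Backward ([untranslate]): a realizability interpretation of the formulas of the
     Θ-calculus by contexts, with "truth" meaning Θ'-derivability and left realizers
     the orthogonal of right realizers.  The Θ-calculus is sound for it ([sound]) and
     α x is adequately realized by x itself ([adequate_alpha]); hence a derivation of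
     α(Γ) ⊢ α(Δ) yields one of Γ ⊢ Δ.
   - The genuine side conditions [Side] are compatible ([Side_compatible]): they are
     related by induction on their fuel (the modal depth), using both directions at
     smaller depth ([Side_ext_alpha]). *)

Ltac sets :=
  let y := fresh "y" in let Hy := fresh "Hy" in
  intros y Hy; unfold image, add, union, sing, empty in *;
  repeat match goal with
         | H : _ \/ _ |- _ => destruct H
         | H : _ /\ _ |- _ => destruct H
         | H : exists _, _ |- _ => destruct H
         | H : False |- _ => destruct H
         end; subst; eauto 10.

Section Calculus.
Variables (A : Type) (Th : ctheory A) (allowed : form A -> Prop)
  (side : list (pform A) -> form A -> Prop).
Notation deriv := (derivO Th allowed side).

Lemma weaken G D G' D' : deriv G D -> subset G G' -> subset D D' -> deriv G' D'.
Proof. intros; eapply d_weak; eauto. Qed.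

Lemma bigconjL L : forall G D,
  deriv (union G (lset L)) D -> deriv (add G (emb (bigconj L))) D.
Proof.
  induction L as [|x [|y ys] IH]; intros G D H.
  - eapply weaken; [exact H| |sets]. intros z [Hz|[f [[] _]]]; left; auto.
  - eapply weaken; [exact H| |sets].
    intros z [Hz|[f [[<-|[]] ->]]]; [left | right]; auto.
  - apply d_andL, IH. eapply weaken; [exact H| |sets].
    intros z [Hz|[f [[<-|Hf] ->]]]; [left; left | left; right | right; exists f]; auto.
Qed.

Lemma bigconjR L : forall G D,
  (forall x, In x L -> deriv G (add D (emb x))) -> deriv G (add D (emb (bigconj L))).
Proof.
  induction L as [|x [|y ys] IH]; intros G D H.
  - eapply weaken; [apply d_topR | sets | sets].
  - apply H; simpl; auto.
  - apply d_andR; [apply H; simpl; auto|].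
    apply IH; intros z Hz; apply H; simpl; auto.
Qed.

Lemma bigconj_axiom G D L : subset (lset L) G -> deriv G (add D (emb (bigconj L))).
Proof.
  intros HL; apply bigconjR; intros x Hx.
  eapply weaken; [apply d_ax| |sets].
  intros y ->; apply HL; exists x; auto.
Qed.

Lemma cut_bigconj G D L :
  deriv G (add D (emb (bigconj L))) -> deriv (union G (lset L)) D -> deriv G D.
Proof.
  intros H1 H2; apply bigconjL in H2.
  eapply weaken; [eapply d_cut; [exact H1|exact H2]| |]; sets.
Qed.

End Calculus.

Lemma allowed_mono A (Th : ctheory A) allowed allowed2 side G D :
  derivO Th allowed side G D -> (forall p, allowed p -> allowed2 p) ->
  derivO Th allowed2 side G D.
Proof. intros H Ha; induction H; solve [econstructor; eauto]. Qed.

Section Syntax.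
Variable A : Type.

Lemma mdepth_emb (x : pform A) : mdepth (emb x) = 0.
Proof. induction x; simpl; auto; rewrite IHx1, IHx2; auto. Qed.

Lemma alpha_emb (phi psi x : pform A) : alpha phi psi (emb x) = emb x.
Proof. induction x; simpl; congruence. Qed.

Lemma mdepth_alpha (phi psi : pform A) x : mdepth (alpha phi psi x) = mdepth x.
Proof. induction x; simpl; rewrite ?mdepth_emb; lia. Qed.

Lemma mdepth_imp_emb (psi : pform A) q : mdepth (Imp (emb psi) q) = mdepth q.
Proof. simpl; rewrite mdepth_emb; lia. Qed.

Lemma lset_incl (l l' : list (pform A)) : incl l l' -> subset (lset l) (lset l').
Proof. intros H y [f [Hf ->]]; exists f; auto. Qed.

Lemma lset_fst_incl (l0 l : list (crule A)) :
  incl l0 l -> subset (lset (map fst l0)) (lset (map fst l)).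
Proof. intros H; apply lset_incl, incl_map, H. Qed.

Lemma Side_mono Th n (psis psis' : list (pform A)) q :
  Side Th n psis q -> incl psis psis' -> Side Th n psis' q.
Proof.
  destruct n; simpl; [tauto|]. intros H Hi.
  eapply weaken; [exact H| apply lset_incl; auto | sets].
Qed.

Lemma Side_imp Th n (psi : pform A) psis q :
  Side Th n psis (Imp (emb psi) q) <-> Side Th n (psi :: psis) q.
Proof.
  destruct n; simpl; [tauto|].
  assert (Hdepth : forall p : form A,
            mdepth p < Nat.max (mdepth (emb psi)) (mdepth q) <-> mdepth p < mdepth q)
    by (intros p; rewrite mdepth_emb; lia).
  split; intro H.
  - apply allowed_mono with (allowed := fun p => mdepth p < mdepth (Imp (emb psi) q));
      [| intros p; apply Hdepth].
    assert (Hmp : derivO Th (fun p => mdepth p < mdepth (Imp (emb psi) q)) (Side Th n)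
                    (add (sing (emb psi)) (Imp (emb psi) q)) (sing q)).
    { apply d_impL.
      - eapply weaken; [apply (d_ax _ _ _ (emb psi)) | sets | sets].
      - eapply weaken; [apply (d_ax _ _ _ q) | sets | sets]. }
    eapply weaken; [eapply (d_cut (D := @empty A) (p := Imp (emb psi) q));
                    [eapply weaken; [exact H | sets | sets] | exact Hmp] | |sets].
    intros y [[f [Hf ->]] | ->]; [exists f | exists psi]; simpl; auto.
  - apply allowed_mono with (allowed := fun p => mdepth p < mdepth q); [| intros p; apply Hdepth].
    eapply weaken; [apply (d_impR (G := lset psis) (D := @empty A)) | sets | sets].
    eapply weaken; [exact H | | sets].
    intros y [f [[<-|Hf] ->]]; [right; reflexivity | left; exists f; auto].
Qed.
End Syntax.

Section Extension.
Variables (A : Type) (Th : ctheory A) (phi psi : pform A).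
Variables (allowed allowed' : form A -> Prop)
  (side side' : list (pform A) -> form A -> Prop).
Notation Th' := (ext Th phi psi).
Notation al := (alpha phi psi).

Lemma ext_rules_split (l : list (crule A)) : (forall r, In r l -> Th' r) ->
  exists l0, (forall r, In r l0 -> Th r) /\ incl l0 l /\ incl l ((phi, psi) :: l0).
Proof.
  induction l as [|r l IH]; intros Hl.
  - exists nil; repeat split; intros x [].
  - destruct IH as [l0 [H0 [Hsub Hcov]]]; [intros x Hx; apply Hl; right; auto|].
    destruct (Hl r (or_introl eq_refl)) as [Hr| ->].
    + exists (r :: l0); repeat split.
      * intros x [<-|Hx]; auto.
      * apply incl_cons; [left; auto | apply incl_tl; auto].
      * intros x [<-|Hx]; [right; left; auto|].
        destruct (Hcov x Hx) as [<-|H]; [left | right; right]; auto.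
    + exists l0; repeat split; auto.
      * apply incl_tl; auto.
      * apply incl_cons; [left; auto | auto].
Qed.

(* The conditions relating the two side conditions at a boxed formula p, as they
   hold for the genuine side conditions of S_Θ and S_Θ'. *)
Record compatible (p : form A) : Prop := {
  compat_allowed : allowed' p;
  compat_side : forall psis, side' psis p <-> side psis (al p);
  compat_imp : forall psis, side psis (Imp (emb psi) (al p)) <-> side (psi :: psis) (al p);
  compat_mono : forall psis psis', incl psis psis' -> side' psis p -> side' psis' p }.

Lemma ext_premises p (l : list (crule A)) : compatible p ->
  (forall r, In r l -> Th' r) -> side' (map snd l) p ->
  ((forall r, In r l -> Th r) /\ side (map snd l) (al p)) \/
  (In (phi, psi) l /\ exists l0, (forall r, In r l0 -> Th r) /\ incl l0 l /\
     side (map snd l0) (Imp (emb psi) (al p))).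
Proof.
  intros [_ Hside Himp Hmono] Hl Hs.
  destruct (ext_rules_split Hl) as [l0 [H0 [Hsub Hcov]]].
  destruct (classic (In (phi, psi) l)) as [Hin|Hnin].
  - right; split; [exact Hin|]. exists l0; repeat split; auto.
    apply Himp, Hside. eapply Hmono; [|exact Hs].
    apply (incl_map snd) in Hcov; exact Hcov.
  - left; split; [|apply Hside; exact Hs].
    intros r Hr; destruct (Hcov r Hr) as [<-|H]; [contradiction | auto].
Qed.

Section Forward.
Notation deriv := (derivO Th allowed side).
Hypothesis Hcompat : forall p, allowed' p -> compatible p.
Hypothesis Hallowed : forall p, allowed' p -> allowed (al p) /\ allowed (Imp (emb psi) (al p)).

Lemma translate_boxR G D (l : list (crule A)) p : allowed' p ->
  (forall r, In r l -> Th' r) -> side' (map snd l) p ->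
  deriv G (add D (emb (bigconj (map fst l)))) -> deriv G (add D (al (Box p))).
Proof.
  intros Hp Hl Hs Hprem; simpl; apply d_orR.
  destruct (ext_premises (Hcompat Hp) Hl Hs) as [[HTh Hs0]|[Hin [l0 [H0 [Hsub Hs0]]]]].
  - apply (d_boxR l (al p) (proj1 (Hallowed Hp)) HTh Hs0).
    eapply weaken; [exact Hprem | sets | sets].
  - assert (Hcut : forall E, deriv (union G (lset (map fst l))) (add D E) -> deriv G (add D E)).
    { intros E HE; apply (cut_bigconj (L := map fst l)); [|exact HE].
      eapply weaken; [exact Hprem | sets | sets]. }
    eapply weaken; [apply (d_andR (G := G) (D := D) (p := emb phi)) | sets | sets].
    + apply Hcut; eapply weaken; [apply d_ax | | sets].
      intros y ->; right; exists phi; split; auto.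
      apply in_map_iff; exists (phi, psi); auto.
    + apply (d_boxR l0 _ (proj2 (Hallowed Hp)) H0 Hs0), Hcut.
      apply bigconj_axiom; intros y Hy; right; apply (lset_fst_incl Hsub), Hy.
Qed.

Lemma translate_boxL G D p : allowed' p ->
  (forall l : list (crule A), (forall r, In r l -> Th' r) -> side' (map snd l) p ->
     deriv (union G (lset (map fst l))) D) ->
  deriv (add G (al (Box p))) D.
Proof.
  intros Hp Hprem; destruct (Hcompat Hp) as [_ Hside Himp _].
  simpl; apply d_orL.
  - apply d_andL; eapply d_boxL; [exact (proj2 (Hallowed Hp))|].
    intros l Hl Hs.
    assert (Hl' : forall r, In r ((phi, psi) :: l) -> Th' r)
      by (intros r [<-|Hr]; [right | left]; auto).
    eapply weaken; [exact (Hprem _ Hl' (proj2 (Hside _) (proj1 (Himp _) Hs))) | | sets].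
    intros y [Hy|[f [[<-|Hf] ->]]]; [left; left | left; right | right; exists f]; auto.
  - eapply d_boxL; [exact (proj1 (Hallowed Hp))|].
    intros l Hl Hs.
    apply Hprem; [intros r Hr; left; auto | apply Hside; exact Hs].
Qed.

(* α fixes propositional formulas, in particular the causes of rules. *)
Lemma image_lset_union G L :
  subset (image al (union G (lset L))) (union (image al G) (lset L)).
Proof.
  intros y [x [[Hx|[f [Hf ->]]] ->]].
  - left; exists x; auto.
  - right; rewrite alpha_emb; exists f; auto.
Qed.

Lemma translate G D : derivO Th' allowed' side' G D -> deriv (image al G) (image al D).
Proof.
  intros H; induction H as [p | | | G D G' D' _ IH HG HD | G D p _ IH | G D p _ IH
    | G D p q _ IH | G D p q _ IH1 _ IH2 | G D p q _ IH1 _ IH2 | G D p q _ IH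
    | G D p q _ IH1 _ IH2 | G D p q _ IH | G D l p Hp Hl Hs _ IH | G D p Hp _ IH
    | G D G' D' p _ IH1 _ IH2].
  - eapply weaken; [apply (d_ax _ _ _ (al p)) | sets | sets].
  - eapply weaken; [apply d_botL | sets | sets].
  - eapply weaken; [apply d_topR | sets | sets].
  - eapply weaken; [exact IH | sets | sets].
  - eapply weaken; [apply (d_negL (G := image al G) (D := image al D) (p := al p)) | sets | sets].
    eapply weaken; [exact IH | sets | sets].
  - eapply weaken; [apply (d_negR (G := image al G) (D := image al D) (p := al p)) | sets | sets].
    eapply weaken; [exact IH | sets | sets].
  - eapply weaken; [apply (d_andL (G := image al G) (D := image al D) (p := al p) (q := al q)) | sets | sets].
    eapply weaken; [exact IH | sets | sets].
  - eapply weaken; [apply (d_andR (G := image al G) (D := image al D) (p := al p) (q := al q)) | sets | sets].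
    + eapply weaken; [exact IH1 | sets | sets].
    + eapply weaken; [exact IH2 | sets | sets].
  - eapply weaken; [apply (d_orL (G := image al G) (D := image al D) (p := al p) (q := al q)) | sets | sets].
    + eapply weaken; [exact IH1 | sets | sets].
    + eapply weaken; [exact IH2 | sets | sets].
  - eapply weaken; [apply (d_orR (G := image al G) (D := image al D) (p := al p) (q := al q)) | sets | sets].
    eapply weaken; [exact IH | sets | sets].
  - eapply weaken; [apply (d_impL (G := image al G) (D := image al D) (p := al p) (q := al q)) | sets | sets].
    + eapply weaken; [exact IH1 | sets | sets].
    + eapply weaken; [exact IH2 | sets | sets].
  - eapply weaken; [apply (d_impR (G := image al G) (D := image al D) (p := al p) (q := al q)) | sets | sets].
    eapply weaken; [exact IH | sets | sets].
  - eapply weaken; [apply (translate_boxR (G := image al G) (D := image al D) Hp Hl Hs) | sets | sets].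
    eapply weaken; [exact IH | sets | ].
    intros y [x [[Hx | ->] ->]]; [left; exists x; auto | right; apply alpha_emb].
  - eapply weaken; [apply (translate_boxL (G := image al G) (D := image al D) Hp) | sets | sets].
    intros l Hl Hs; eapply weaken; [exact (IH l Hl Hs) | apply image_lset_union | sets].
  - eapply weaken; [apply (d_cut (G := image al G) (D := image al D) (G' := image al G') (D' := image al D') (p := al p)) | sets | sets].
    + eapply weaken; [exact IH1 | sets | sets].
    + eapply weaken; [exact IH2 | sets | sets].
Qed.
End Forward.

Section Backward.
Notation deriv := (derivO Th allowed side).

Definition ctx : Type := (fset A * fset A)%type.
Definition holds (c : ctx) : Prop := derivO Th' allowed' side' (fst c) (snd c).
Definition join (c d : ctx) : ctx := (union (fst c) (fst d), union (snd c) (snd d)).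
Definition ctx_le (c d : ctx) : Prop := subset (fst c) (fst d) /\ subset (snd c) (snd d).
Definition orth (S : ctx -> Prop) (c : ctx) : Prop := forall d, S d -> holds (join c d).

(* [realR f c]: the context c can receive f on its right.  Connectives are read
   through their right rules (up to orthogonality), and □q through the premises of
   the Θ-rule □L, so that the Θ-calculus becomes sound for this reading. *)
Fixpoint realR (f : form A) : ctx -> Prop :=
  match f with
  | Atom x => fun c => holds (join c (sing (Atom x), @empty A))
  | Top _ => holds
  | Bot _ => fun _ => True
  | Neg p => orth (realR p)
  | And p q => fun c => forall x y, orth (realR p) x -> orth (realR q) y -> holds (join c (join x y))
  | Or p q => fun c => realR p c /\ realR q c
  | Imp p q => fun c => orth (realR p) c /\ realR q c
  | Box q => fun c => forall l, (forall r, In r l -> Th r) -> side (map snd l) q ->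
                                holds (join c (lset (map fst l), @empty A))
  end.

Definition realL (f : form A) : ctx -> Prop := orth (realR f).

Ltac ctx_sets := unfold ctx_le, join in *; simpl in *; split; sets.

Lemma holds_mono c d : holds c -> ctx_le c d -> holds d.
Proof. intros H [H1 H2]; eapply weaken; eauto. Qed.

Lemma holds_join_comm c d : holds (join c d) -> holds (join d c).
Proof. intros H; eapply holds_mono; [exact H | ctx_sets]. Qed.

Lemma orth_mono S c d : orth S c -> ctx_le c d -> orth S d.
Proof. intros H Hle e He; eapply holds_mono; [apply H, He | destruct Hle; ctx_sets]. Qed.

Lemma realR_mono f : forall c d, realR f c -> ctx_le c d -> realR f d.
Proof.
  induction f; intros c d H Hle; simpl in *.
  - eapply holds_mono; [exact H | destruct Hle; ctx_sets].
  - eapply holds_mono; eauto.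
  - auto.
  - eapply orth_mono; eauto.
  - intros x y Hx Hy; eapply holds_mono; [apply H; eauto | destruct Hle; ctx_sets].
  - destruct H; split; eauto.
  - destruct H; split; [eapply orth_mono|]; eauto.
  - intros l Hl Hs; eapply holds_mono; [apply H; eauto | destruct Hle; ctx_sets].
Qed.

Lemma orth_clash S c : orth S c -> S c -> holds c.
Proof. intros H1 H2; eapply holds_mono; [apply H1, H2 | ctx_sets]. Qed.

Lemma orth_triple S c : orth (orth (orth S)) c -> orth S c.
Proof. intros H s Hs; apply H; intros d Hd; apply holds_join_comm, Hd, Hs. Qed.

Lemma realR_biorth f : forall c, orth (orth (realR f)) c -> realR f c.
Proof.
  induction f; intros c H; simpl in *.
  - apply H; intros r Hr; apply holds_join_comm, Hr.
  - assert (Hempty : orth holds (@empty A, @empty A))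
      by (intros d Hd; eapply holds_mono; [exact Hd | ctx_sets]).
    eapply holds_mono; [exact (H _ Hempty) | ctx_sets].
  - auto.
  - apply orth_triple; auto.
  - intros x y Hx Hy; apply H; intros e He; apply holds_join_comm, He; auto.
  - split.
    + apply IHf1; intros d Hd; apply H; intros e [He _]; apply Hd, He.
    + apply IHf2; intros d Hd; apply H; intros e [_ He]; apply Hd, He.
  - split.
    + intros r Hr; apply H; intros e [He _]; apply holds_join_comm, He, Hr.
    + apply IHf2; intros d Hd; apply H; intros e [_ He]; apply Hd, He.
  - intros l Hl Hs; apply H; intros e He; apply holds_join_comm, He; auto.
Qed.

Definition adequate (f y : form A) : Prop :=
  realR f (@empty A, sing y) /\ realL f (sing y, @empty A).

Ltac unfold_real := unfold realL, orth, holds, join in *; simpl in *.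

Lemma adequate_atom x : adequate (Atom x) (Atom x).
Proof.
  split; simpl.
  - unfold holds, join; simpl; eapply weaken; [apply (d_ax _ _ _ (Atom x)) | sets | sets].
  - intros d Hd; apply holds_join_comm; auto.
Qed.

Lemma adequate_top : adequate (Top A) (Top A).
Proof.
  split; simpl.
  - apply d_topR.
  - intros d Hd; eapply holds_mono; [exact Hd | ctx_sets].
Qed.

Lemma adequate_bot : adequate (Bot A) (Bot A).
Proof.
  split; simpl; auto.
  intros d _; unfold holds, join; simpl; eapply weaken; [apply d_botL | sets | sets].
Qed.

Lemma adequate_neg f y : adequate f y -> adequate (Neg f) (Neg y).
Proof.
  intros [HR HL]; split; simpl.
  - intros r Hr; specialize (HL r Hr); unfold_real.
    eapply weaken; [apply (d_negR (G := fst r) (D := snd r) (p := y)) | sets | sets].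
    eapply weaken; [exact HL | sets | sets].
  - intros d Hd; specialize (Hd _ HR); unfold_real.
    eapply weaken; [apply (d_negL (G := fst d) (D := snd d) (p := y)) | sets | sets].
    eapply weaken; [exact Hd | sets | sets].
Qed.

Lemma adequate_and f g y z : adequate f y -> adequate g z -> adequate (And f g) (And y z).
Proof.
  intros [HR1 HL1] [HR2 HL2]; split; simpl.
  - intros x w Hx Hw; specialize (Hx _ HR1); specialize (Hw _ HR2); unfold_real.
    eapply weaken; [apply (d_andR (G := union (fst x) (fst w)) (D := union (snd x) (snd w)) (p := y) (q := z)) | sets | sets].
    + eapply weaken; [exact Hx | sets | sets].
    + eapply weaken; [exact Hw | sets | sets].
  - intros c Hc; specialize (Hc _ _ HL1 HL2); unfold_real.
    eapply weaken; [apply (d_andL (G := fst c) (D := snd c) (p := y) (q := z)) | sets | sets].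
    eapply weaken; [exact Hc | sets | sets].
Qed.

Lemma adequate_or f g y z : adequate f y -> adequate g z -> adequate (Or f g) (Or y z).
Proof.
  intros [HR1 HL1] [HR2 HL2]; split; simpl.
  - split; apply realR_biorth; intros d Hd.
    + specialize (Hd _ HR1); unfold_real.
      eapply weaken; [apply (d_orR (G := fst d) (D := snd d) (p := y) (q := z)) | sets | sets].
      eapply weaken; [exact Hd | sets | sets].
    + specialize (Hd _ HR2); unfold_real.
      eapply weaken; [apply (d_orR (G := fst d) (D := snd d) (p := y) (q := z)) | sets | sets].
      eapply weaken; [exact Hd | sets | sets].
  - intros c [Hc1 Hc2]; specialize (HL1 _ Hc1); specialize (HL2 _ Hc2); unfold_real.
    eapply weaken; [apply (d_orL (G := fst c) (D := snd c) (p := y) (q := z)) | sets | sets].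
    + eapply weaken; [exact HL1 | sets | sets].
    + eapply weaken; [exact HL2 | sets | sets].
Qed.

Lemma adequate_imp f g y z : adequate f y -> adequate g z -> adequate (Imp f g) (Imp y z).
Proof.
  intros [HR1 HL1] [HR2 HL2]; split; simpl.
  - split.
    + intros r Hr; specialize (HL1 _ Hr); unfold_real.
      eapply weaken; [apply (d_impR (G := fst r) (D := snd r) (p := y) (q := z)) | sets | sets].
      eapply weaken; [exact HL1 | sets | sets].
    + apply realR_biorth; intros d Hd; specialize (Hd _ HR2); unfold_real.
      eapply weaken; [apply (d_impR (G := fst d) (D := snd d) (p := y) (q := z)) | sets | sets].
      eapply weaken; [exact Hd | sets | sets].
  - intros c [Hc1 Hc2]; specialize (Hc1 _ HR1); specialize (HL2 _ Hc2); unfold_real.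
    eapply weaken; [apply (d_impL (G := fst c) (D := snd c) (p := y) (q := z)) | sets | sets].
    + eapply weaken; [exact Hc1 | sets | sets].
    + eapply weaken; [exact HL2 | sets | sets].
Qed.

Lemma adequate_emb x : adequate (emb x) (emb x).
Proof.
  induction x; simpl.
  - apply adequate_atom.
  - apply adequate_top.
  - apply adequate_bot.
  - apply adequate_neg; auto.
  - apply adequate_and; auto.
  - apply adequate_or; auto.
  - apply adequate_imp; auto.
Qed.

Definition valid (G D : fset A) : Prop :=
  forall X, (forall g, G g -> realL g X) -> (forall d, D d -> realR d X) -> holds X.

Lemma realL_of_right G D p X : valid G (add D p) ->
  (forall g, G g -> realL g X) -> (forall d, D d -> realR d X) -> realL p X.
Proof.
  intros H HG HD r Hr; apply H.
  - intros g Hg; eapply orth_mono; [apply HG; auto | ctx_sets].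
  - intros d [Hd | ->];
      [eapply realR_mono; [apply HD; auto | ctx_sets] | eapply realR_mono; [exact Hr | ctx_sets]].
Qed.

Lemma orth_realL_of_left G D p X : valid (add G p) D ->
  (forall g, G g -> realL g X) -> (forall d, D d -> realR d X) -> orth (realL p) X.
Proof.
  intros H HG HD r Hr; apply H.
  - intros g [Hg | ->];
      [eapply orth_mono; [apply HG; auto | ctx_sets] | eapply orth_mono; [exact Hr | ctx_sets]].
  - intros d Hd; eapply realR_mono; [apply HD; auto | ctx_sets].
Qed.

Lemma valid_ax p : valid (sing p) (sing p).
Proof. intros X HG HD; exact (orth_clash (HG p eq_refl) (HD p eq_refl)). Qed.

Lemma valid_botL : valid (sing (Bot A)) (@empty A).
Proof. intros X HG _; exact (orth_clash (HG _ eq_refl) I). Qed.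

Lemma valid_topR : valid (@empty A) (sing (Top A)).
Proof. intros X _ HD; exact (HD _ eq_refl). Qed.

Lemma valid_weak G D G' D' : valid G D -> subset G G' -> subset D D' -> valid G' D'.
Proof. intros H HG HD X HGX HDX; apply H; auto. Qed.

Lemma valid_negL G D p : valid G (add D p) -> valid (add G (Neg p)) D.
Proof.
  intros H X HG HD; apply (orth_clash (HG (Neg p) (or_intror eq_refl))).
  exact (realL_of_right H (fun g Hg => HG g (or_introl Hg)) HD).
Qed.

Lemma valid_negR G D p : valid (add G p) D -> valid G (add D (Neg p)).
Proof.
  intros H X HG HD.
  apply (@orth_clash (orth (realR p))); [|exact (HD (Neg p) (or_intror eq_refl))].
  exact (orth_realL_of_left H HG (fun d Hd => HD d (or_introl Hd))).
Qed.

Lemma valid_andL G D p q : valid (add (add G p) q) D -> valid (add G (And p q)) D.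
Proof.
  intros H X HG HD; apply (orth_clash (HG (And p q) (or_intror eq_refl))).
  intros x y Hx Hy; apply H.
  - intros g [[Hg | ->] | ->].
    + eapply orth_mono; [apply HG; left; exact Hg | ctx_sets].
    + eapply orth_mono; [exact Hx | ctx_sets].
    + eapply orth_mono; [exact Hy | ctx_sets].
  - intros d Hd; eapply realR_mono; [apply HD; auto | ctx_sets].
Qed.

Lemma valid_andR G D p q :
  valid G (add D p) -> valid G (add D q) -> valid G (add D (And p q)).
Proof.
  intros H1 H2 X HG HD.
  assert (Hp := realL_of_right H1 HG (fun d Hd => HD d (or_introl Hd))).
  assert (Hq := realL_of_right H2 HG (fun d Hd => HD d (or_introl Hd))).
  eapply holds_mono; [apply (HD (And p q) (or_intror eq_refl) X X Hp Hq) | ctx_sets].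
Qed.

Lemma valid_orL G D p q :
  valid (add G p) D -> valid (add G q) D -> valid (add G (Or p q)) D.
Proof.
  intros H1 H2 X HG HD.
  assert (Hp := realR_biorth (orth_realL_of_left H1 (fun g Hg => HG g (or_introl Hg)) HD)).
  assert (Hq := realR_biorth (orth_realL_of_left H2 (fun g Hg => HG g (or_introl Hg)) HD)).
  apply (orth_clash (HG (Or p q) (or_intror eq_refl))); split; auto.
Qed.

Lemma valid_orR G D p q : valid G (add (add D p) q) -> valid G (add D (Or p q)).
Proof.
  intros H X HG HD; destruct (HD (Or p q) (or_intror eq_refl)) as [Hp Hq].
  apply H; auto.
  intros d [[Hd | ->] | ->]; [apply HD; left; auto | exact Hp | exact Hq].
Qed.

Lemma valid_impL G D p q :
  valid G (add D p) -> valid (add G q) D -> valid (add G (Imp p q)) D.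
Proof.
  intros H1 H2 X HG HD.
  assert (Hp := realL_of_right H1 (fun g Hg => HG g (or_introl Hg)) HD).
  assert (Hq := realR_biorth (orth_realL_of_left H2 (fun g Hg => HG g (or_introl Hg)) HD)).
  apply (orth_clash (HG (Imp p q) (or_intror eq_refl))); split; auto.
Qed.

Lemma valid_impR G D p q : valid (add G p) (add D q) -> valid G (add D (Imp p q)).
Proof.
  intros H X HG HD; destruct (HD (Imp p q) (or_intror eq_refl)) as [Hp Hq].
  apply H.
  - intros g [Hg | ->]; [apply HG; auto | exact Hp].
  - intros d [Hd | ->]; [apply HD; left; auto | exact Hq].
Qed.

(* □R: a right realizer of □p meets the conjunction of the causes of any Θ-rule
   for p, which is then cut away. *)
Lemma valid_boxR G D (l : list (crule A)) p :
  (forall r, In r l -> Th r) -> side (map snd l) p ->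
  valid G (add D (emb (bigconj (map fst l)))) -> valid G (add D (Box p)).
Proof.
  intros Hl Hs H X HG HD.
  assert (HL := realL_of_right H HG (fun d Hd => HD d (or_introl Hd))).
  assert (Hconj := HL _ (proj1 (adequate_emb (bigconj (map fst l))))).
  assert (Hbox := HD (Box p) (or_intror eq_refl) l Hl Hs).
  unfold_real; eapply cut_bigconj.
  - eapply weaken; [exact Hconj | sets | sets].
  - eapply weaken; [exact Hbox | sets | sets].
Qed.

(* □L: a left realizer of □p is orthogonal to the right realizer it induces, since
   the causes of each Θ-rule for p are adequately left-realized. *)
Lemma valid_boxL G D p :
  (forall l : list (crule A), (forall r, In r l -> Th r) -> side (map snd l) p ->
     valid (union G (lset (map fst l))) D) ->
  valid (add G (Box p)) D.
Proof.
  intros H X HG HD; apply (orth_clash (HG (Box p) (or_intror eq_refl))).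
  intros l Hl Hs; apply (H l Hl Hs).
  - intros g [Hg | [f [Hf ->]]].
    + eapply orth_mono; [apply HG; left; auto | ctx_sets].
    + eapply orth_mono; [exact (proj2 (adequate_emb f)) |].
      unfold ctx_le, join; simpl; split; [intros y ->; right; exists f; auto | sets].
  - intros d Hd; eapply realR_mono; [apply HD; auto | ctx_sets].
Qed.

Lemma valid_cut G D G' D' p :
  valid G (add D p) -> valid (add G' p) D' -> valid (union G G') (union D D').
Proof.
  intros H1 H2 X HG HD.
  assert (Hp := realL_of_right H1 (fun g Hg => HG g (or_introl Hg)) (fun d Hd => HD d (or_introl Hd))).
  apply H2.
  - intros g [Hg | ->]; [apply HG; right; auto | exact Hp].
  - intros d Hd; apply HD; right; auto.
Qed.

Lemma sound G D : deriv G D -> valid G D.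
Proof.
  induction 1; eauto using valid_ax, valid_botL, valid_topR, valid_weak, valid_negL,
    valid_negR, valid_andL, valid_andR, valid_orL, valid_orR, valid_impL, valid_impR,
    valid_boxR, valid_boxL, valid_cut.
Qed.

Lemma adequate_box_right p : compatible p -> realR (al (Box p)) (@empty A, sing (Box p)).
Proof.
  intros [Hp Hside Himp _]; split.
  - (* φ ∧ □(ψ → α p): adjoin the rule φ ▷ ψ to the Θ-rule for ψ → α p *)
    intros x y Hx Hy.
    assert (Hphi := Hx _ (proj1 (adequate_emb phi))).
    assert (Hbox : realR (Box (Imp (emb psi) (al p))) (join x (@empty A, sing (Box p)))).
    { intros l Hl Hs; apply Himp, Hside in Hs; unfold_real.
      eapply weaken; [apply (d_boxR (G := union (fst x) (lset (map fst l))) (D := snd x)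
                               ((phi, psi) :: l) p Hp) | sets | sets].
      - intros r [<- | Hr]; [right | left]; auto.
      - exact Hs.
      - apply bigconjR; intros e [<- | He].
        + eapply weaken; [exact Hphi | sets | sets].
        + eapply weaken; [apply (d_ax _ _ _ (emb e)) | | sets].
          intros z ->; right; apply in_map_iff in He as [r [<- Hr]].
          exists (fst r); split; auto; apply in_map; auto. }
    eapply holds_mono; [exact (Hy _ Hbox) | ctx_sets].
  - (* □ α p: every Θ-rule is a Θ'-rule *)
    intros l Hl Hs; apply Hside in Hs; unfold_real.
    eapply weaken; [apply (d_boxR (G := lset (map fst l)) (D := @empty A) l p Hp) | sets | sets].
    + intros r Hr; left; auto.
    + exact Hs.
    + apply bigconj_axiom; sets.
Qed.

(* The left half: the premises of □'L are split by [ext_premises] between the two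
   disjuncts of α(□'p). *)
Lemma adequate_box_left p : compatible p -> realL (al (Box p)) (sing (Box p), @empty A).
Proof.
  intros Hc; destruct (Hc) as [Hp _ _ _].
  intros c [HA HB]; unfold_real.
  eapply weaken; [apply (d_boxL (G := fst c) (D := snd c) p Hp) | sets | sets].
  intros l Hl Hs.
  destruct (ext_premises Hc Hl Hs) as [[HTh Hs0] | [Hin [l0 [H0 [Hsub Hs0]]]]].
  - assert (Hd := HB l HTh Hs0); unfold_real.
    eapply weaken; [exact Hd | sets | sets].
  - assert (Hb : realL (Box (Imp (emb psi) (al p))) (lset (map fst l0), @empty A))
      by (intros r Hr; apply holds_join_comm, Hr; auto).
    assert (Hd := HA _ _ (proj2 (adequate_emb phi)) Hb); unfold_real.
    eapply weaken; [exact Hd | | sets].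
    intros y [Hy | [-> | Hy]]; [left; auto | |].
    + right; exists phi; split; auto; apply in_map_iff; exists (phi, psi); auto.
    + right; apply (lset_fst_incl Hsub), Hy.
Qed.

Lemma adequate_box p : compatible p -> adequate (al (Box p)) (Box p).
Proof. intros Hc; split; [apply adequate_box_right | apply adequate_box_left]; exact Hc. Qed.

Lemma adequate_alpha x : (forall p, mdepth p < mdepth x -> compatible p) -> adequate (al x) x.
Proof.
  induction x; simpl; intros H.
  - apply adequate_atom.
  - apply adequate_top.
  - apply adequate_bot.
  - apply adequate_neg; auto.
  - apply adequate_and; [apply IHx1 | apply IHx2]; intros p Hp; apply H; lia.
  - apply adequate_or; [apply IHx1 | apply IHx2]; intros p Hp; apply H; lia.
  - apply adequate_imp; [apply IHx1 | apply IHx2]; intros p Hp; apply H; lia.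
  - apply adequate_box, H; lia.
Qed.

Lemma untranslate (G D : fset A) :
  (forall x, G x \/ D x -> forall p, mdepth p < mdepth x -> compatible p) ->
  deriv (image al G) (image al D) -> derivO Th' allowed' side' G D.
Proof.
  intros Hc Hd; apply (sound Hd (X := (G, D))).
  - intros g [x [Hx ->]].
    eapply orth_mono; [exact (proj2 (adequate_alpha (Hc x (or_introl Hx)))) | ctx_sets].
  - intros d [x [Hx ->]].
    eapply realR_mono; [exact (proj1 (adequate_alpha (Hc x (or_intror Hx)))) | ctx_sets].
Qed.
End Backward.
End Extension.

(* For fuel n, the side conditions of S_Θ' at q and of S_Θ at α q agree for every q
   of depth below n: the derivations inside them only use box rules of smaller
   depth, where compatibility holds by induction. *)
Lemma Side_ext_alpha A (Th : ctheory A) phi psi n : forall psis q, mdepth q < n ->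
  (Side (ext Th phi psi) n psis q <-> Side Th n psis (alpha phi psi q)).
Proof.
  induction n as [|m IH]; intros psis q Hq; [simpl; tauto|].
  assert (Hc : forall p, mdepth p < mdepth q ->
    compatible phi psi (fun p0 => mdepth p0 < mdepth q) (Side Th m) (Side (ext Th phi psi) m) p).
  { intros p Hp; split.
    - exact Hp.
    - intros ps; apply IH; lia.
    - intros ps; apply Side_imp.
    - intros ps ps' Hi Hs; eapply Side_mono; eauto. }
  simpl; split; intro H.
  - assert (Hallowed : forall p, mdepth p < mdepth q ->
      mdepth (alpha phi psi p) < mdepth (alpha phi psi q) /\
      mdepth (Imp (emb psi) (alpha phi psi p)) < mdepth (alpha phi psi q))
      by (intros p Hp; rewrite mdepth_imp_emb, !mdepth_alpha; auto).
    eapply weaken; [exact (translate Hc Hallowed H) | |].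
    + intros y [x [[f [Hf ->]] ->]]; rewrite alpha_emb; exists f; auto.
    + intros y [x [-> ->]]; reflexivity.
  - refine (untranslate _ (weaken H _ _)).
    + intros x [[f [Hf ->]] | ->] p Hp; [rewrite mdepth_emb in Hp; lia | apply Hc; auto].
    + intros y [f [Hf ->]]; exists (emb f); split; [exists f; auto | rewrite alpha_emb; auto].
    + intros y ->; exists q; split; reflexivity.
Qed.

Lemma Side_compatible A (Th : ctheory A) phi psi p :
  compatible phi psi (fun _ => True)
    (fun psis p => Side Th (S (mdepth p)) psis p)
    (fun psis p => Side (ext Th phi psi) (S (mdepth p)) psis p) p.
Proof.
  split.
  - exact I.
  - intros ps; rewrite mdepth_alpha; apply Side_ext_alpha; lia.
  - intros ps; rewrite mdepth_imp_emb, mdepth_alpha; apply Side_imp.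
  - intros ps ps' Hi Hs; eapply Side_mono; eauto.
Qed.

Theorem mainTheorem18 (A : Type) (Th : ctheory A) (phi psi : pform A)
    (G D : fset A) :
  Provable (ext Th phi psi) G D <->
  Provable Th (image (alpha phi psi) G) (image (alpha phi psi) D).
Proof.
  unfold Provable; split; intro H.
  - refine (translate _ _ H).
    + intros p _; apply Side_compatible.
    + intros p _; split; exact I.
  - refine (untranslate _ H).
    intros x _ p _; apply Side_compatible.
Qed.
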